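(* Let $G$ be a $P_5$-free graph and let $C\subseteq V(G)$. Suppose $C$ is partitioned into independent sets $C_1,\dots,C_k$ of $G$, and let $D\subseteq C$ be a set such that $G[D]$ is connected, every vertex of $C$ is in $D$ or has a neighbor in $D$, and $D\cap C_r\neq\emptyset$ for every $r\in\{1,\dots,k\}$. Let $X := N(C)\setminus N(D)$ and $Y := V(G)\setminus N[C]$. Then there is no edge of $G$ with one endpoint in $X$ and the other in $Y$.
   Context: For $A\subseteq V(G)$, $N(A)$ is the set of vertices outside $A$ having a neighbor in $A$ (open neighborhood), and $N[A]=A\cup N(A)$. A graph is $P_5$-free if it has no induced path on 5 vertices. *)

From mathcomp Require Import all_boot.
Set Implicit Arguments. Unset Strict Implicit. Unset Printing Implicit Defensive.

Section Graphs.
Variable T : finType.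
Variable e : rel T.

Definition simple_graph : Prop := symmetric e /\ irreflexive e.

Definition nbh (A : {set T}) : {set T} :=
  [set v | (v \notin A) && [exists u in A, e v u]].

Definition cnbh (A : {set T}) : {set T} := A :|: nbh A.

Definition independent (A : {set T}) : Prop :=
  forall x y, x \in A -> y \in A -> ~~ e x y.

Definition induced_connected (D : {set T}) : Prop :=
  D != set0 /\
  forall x y, x \in D -> y \in D ->
    connect [rel a b | [&& a \in D, b \in D & e a b]] x y.

Definition P5_free : Prop :=
  ~ exists f : 'I_5 -> T, injective f /\
      forall i j : 'I_5, e (f i) (f j) = ((i.+1 == j) || (j.+1 == i)).

Definition is_partition (k : nat) (C : {set T}) (Cs : 'I_k -> {set T}) : Prop :=
  (\bigcup_(r < k) Cs r = C) /\
  (forall r s : 'I_k, r != s -> [disjoint Cs r & Cs s]).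
End Graphs.

(* Suppose x ~ y with x in N(C) \ N(D) and y outside N[C]. Pick a neighbour c of
   x in C; then c is not in D but has a neighbour in D.  The class C_r of c is
   independent and meets D, so D also contains a non-neighbour of c.  Walking
   inside G[D] from the neighbour to the non-neighbour, we cross an edge uw of
   G[D] with u ~ c and w not adjacent to c.  Since x sees nothing of D and y
   sees nothing of C, the path y - x - c - u - w is an induced P5. *)
From mathcomp Require Import all_boot.

Set Implicit Arguments.
Unset Strict Implicit.
Unset Printing Implicit Defensive.

Lemma connect_exit_edge (T : finType) (r : rel T) (P : pred T) a b :
  connect r a b -> P a -> ~~ P b -> exists u w, [/\ r u w, P u & ~~ P w].
Proof.
move/connectP=> [p]; elim: p a => [|z p IH] a /=; first by move=> _ -> ->.
move=> /andP[raz pz] Eb Pa nPb.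
have [Pz | nPz] := boolP (P z); first exact: IH pz Eb Pz nPb.
by exists a, z.
Qed.

(* No two vertices of the path 0-1-2-3-4 have the same neighbours, so a map
   realising its adjacency cannot identify vertices. *)
Lemma P5_adjacency_injective (T : Type) (e : rel T) (f : 'I_5 -> T) :
  (forall i j : 'I_5, e (f i) (f j) = (i.+1 == j) || (j.+1 == i)) -> injective f.
Proof.
move=> adj i j fij; apply: val_inj.
have same_nbrs (k : 'I_5) :
    ((i.+1 == k) || (k.+1 == i)) = ((j.+1 == k) || (k.+1 == j)).
  by rewrite -adj -(adj j) fij.
move: (same_nbrs (inord 0)) (same_nbrs (inord 1)) (same_nbrs (inord 2))
  (same_nbrs (inord 3)) (same_nbrs (inord 4)).
rewrite !inordK //; clear fij same_nbrs.
by case: i j => [[|[|[|[|[|i]]]]] Hi] [[|[|[|[|[|j]]]]] Hj].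
Qed.

Section InducedP5.
Variables (T : finType) (e : rel T).
Hypothesis sym_e : symmetric e.
Hypothesis irr_e : irreflexive e.

Lemma P5_freeN a b c d f :
  e a b -> e b c -> e c d -> e d f ->
  ~~ e a c -> ~~ e a d -> ~~ e a f -> ~~ e b d -> ~~ e b f -> ~~ e c f ->
  ~ P5_free e.
Proof.
move=> eab ebc ecd edf /negbTE nac /negbTE nad /negbTE naf /negbTE nbd
  /negbTE nbf /negbTE ncf; apply.
set g := fun i : 'I_5 => nth a [:: a; b; c; d; f] i.
have adj i j : e (g i) (g j) = (i.+1 == j) || (j.+1 == i).
  case: i j => [[|[|[|[|[|i]]]]] Hi] [[|[|[|[|[|j]]]]] Hj] //=;
    by rewrite ?irr_e // sym_e.
by exists g; split; [apply: P5_adjacency_injective | ].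
Qed.

End InducedP5.

Section Neighbourhoods.
Variables (T : finType) (e : rel T).

Lemma nbhP (A : {set T}) v :
  reflect (v \notin A /\ exists2 u, u \in A & e v u) (v \in nbh e A).
Proof.
rewrite inE; apply: (iffP andP) => [[-> /existsP[u /andP[]]] | [-> [u uA evu]]].
  by split=> //; exists u.
by split=> //; apply/existsP; exists u; rewrite uA.
Qed.

Lemma notin_nbh_nadj (A : {set T}) u v :
  v \notin A -> v \notin nbh e A -> u \in A -> ~~ e v u.
Proof. by move=> vA /nbhP vN uA; apply/negP => evu; apply: vN; split=> //; exists u. Qed.

Lemma notin_cnbh_nadj (A : {set T}) u v : v \notin cnbh e A -> u \in A -> ~~ e v u.
Proof. by rewrite inE negb_or => /andP[]; apply: notin_nbh_nadj. Qed.

Lemma cnbh_nbr (A : {set T}) v :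
  v \in cnbh e A -> v \notin A -> exists2 u, u \in A & e v u.
Proof. by rewrite inE => /orP[-> // | /nbhP[]]. Qed.

Lemma induced_connected_exit_edge (D : {set T}) (c d d' : T) :
  induced_connected e D -> d \in D -> d' \in D -> e c d -> ~~ e c d' ->
  exists u w, [/\ u \in D, w \in D, e u w, e c u & ~~ e c w].
Proof.
move=> [_ conD] dD d'D ecd ncd'.
have [u [w [/and3P[uD wD euw] ecu ncw]]] :=
  connect_exit_edge (P := e c) (conD _ _ dD d'D) ecd ncd'.
by exists u, w.
Qed.

Lemma partition_nonnbr k (C D : {set T}) (Cs : 'I_k -> {set T}) c :
  is_partition C Cs -> (forall r, independent e (Cs r)) ->
  (forall r, D :&: Cs r != set0) -> c \in C -> exists2 d, d \in D & ~~ e c d.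
Proof.
move=> [UC _] indep meet; rewrite -UC => /bigcupP[r _ cr].
have /set0Pn[d] := meet r; rewrite inE => /andP[dD dr].
by exists d; last exact: indep cr dr.
Qed.

End Neighbourhoods.

Theorem claim4p3 (T : finType) (e : rel T) (C D : {set T}) (k : nat)
    (Cs : 'I_k -> {set T}) :
  simple_graph e -> P5_free e ->
  is_partition C Cs ->
  (forall r, independent e (Cs r)) ->
  D \subset C ->
  induced_connected e D ->
  C \subset cnbh e D ->
  (forall r, D :&: Cs r != set0) ->
  forall x y, x \in nbh e C :\: nbh e D -> y \in ~: cnbh e C -> ~~ e x y.
Proof.
move=> [sym irr] P5 partC indep sDC conD sCN meet x y.
rewrite in_setD in_setC => /andP[xND /nbhP[xC [c cC exc]]] yNC.
have xD : x \notin D by apply: contra xC; apply: (subsetP sDC).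
have xnD v : v \in D -> ~~ e x v by apply: notin_nbh_nadj.
have ynC v : v \in C -> ~~ e y v by apply: notin_cnbh_nadj.
have cD : c \notin D by apply: contraL exc; apply: xnD.
have [d dD ecd] := cnbh_nbr (subsetP sCN c cC) cD.
have [d' d'D ncd'] := partition_nonnbr partC indep meet cC.
have [u [w [uD wD euw ecu ncw]]] := induced_connected_exit_edge conD dD d'D ecd ncd'.
have [uC wC] := (subsetP sDC u uD, subsetP sDC w wD).
apply/negP => exy; apply: (P5_freeN sym irr (a := y) _ exc ecu euw) P5.
- by rewrite sym.
all: by rewrite ?ynC ?xnD.
Qed.
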